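(* Let $G$ be a finitely generated group satisfying Kůrka's dichotomy, and let $H$ be a finitely generated subgroup of $G$. Then $H$ satisfies Kůrka's dichotomy.
   Context: For a finitely generated group $\Gamma$ with finite generating set $E$ closed under inverses, let $d_E$ be the word metric and define the Cantor metric on $A^\Gamma$ ($A$ a finite alphabet) by $d^E(x,y)=2^{-k}$ with $k=\min\{d_E(1,g): x(g)\neq y(g)\}$; $B^E(x,r)$ is its closed ball. A cellular automaton (CA) on $\Gamma$ with alphabet $A$ is a map $\Phi:A^\Gamma\to A^\Gamma$ given by a finite $S\subseteq\Gamma$ and $\mu:A^S\to A$ via $\Phi(x)(g)=\mu(s\mapsto x(gs))$. $x$ is an equicontinuity point of $\Phi$ if $\forall\epsilon>0\,\exists\delta>0\,\forall t\in\mathbb{N}$, $\Phi^t(B^E(x,\delta))\subseteq B^E(\Phi^t(x),\epsilon)$. $\Phi$ is sensitive to initial conditions if $\exists\epsilon>0\,\forall x\,\forall\delta>0\,\exists t\in\mathbb{N}\,\exists y\in B^E(x,\delta)$ with $\Phi^t(y)\notin B^E(\Phi^t(x),\epsilon)$. These notions do not depend on $E$. The group $\Gamma$ satisfies Kůrka's dichotomy if for every finite alphabet $A$, every CA on $\Gamma$ that is not sensitive to initial conditions has an equicontinuity point (equivalently: a CA on $\Gamma$ is sensitive iff it has no equicontinuity point). *)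

From Stdlib Require Import Reals List.
Import ListNotations.
Open Scope R_scope.

Record Group := {
  carrier :> Type;
  gmul : carrier -> carrier -> carrier;
  gone : carrier;
  ginv : carrier -> carrier;
  gmulA : forall a b c, gmul a (gmul b c) = gmul (gmul a b) c;
  gmul1l : forall a, gmul gone a = a;
  gmul1r : forall a, gmul a gone = a;
  gmulVl : forall a, gmul (ginv a) a = gone;
  gmulVr : forall a, gmul a (ginv a) = gone
}.

Arguments gmul {_}. Arguments gone {_}. Arguments ginv {_}.

Definition group_hom (H G : Group) (f : H -> G) : Prop :=
  forall a b, f (gmul a b) = gmul (f a) (f b).
Arguments group_hom {H G}.

Definition word_prod (G : Group) (w : list G) : G :=
  fold_right gmul gone w.
Arguments word_prod {G}.

Definition word_over (G : Group) (E : list G) (w : list G) : Prop :=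
  forall e, In e w -> In e E.
Arguments word_over {G}.

Definition gen_set (G : Group) (E : list G) : Prop :=
  (forall e, In e E -> In (ginv e) E) /\
  (forall g : G, exists w, word_over E w /\ word_prod w = g).
Arguments gen_set {G}.

Definition fin_gen (G : Group) : Prop := exists E : list G, gen_set E.

Definition word_len (G : Group) (E : list G) (g : G) (n : nat) : Prop :=
  (exists w, word_over E w /\ word_prod w = g /\ length w = n) /\
  (forall w, word_over E w -> word_prod w = g -> (n <= length w)%nat).
Arguments word_len {G}.

(* y lies in the closed ball B^E(x, r): d^E(x,y) <= r, where
   d^E(x,y) = 2^{-k}, k = min{ d_E(1,g) : x(g) <> y(g) } (and 0 if x = y).
   Since 2^{-k} is the max of 2^{-d_E(1,g)} over g with x(g) <> y(g),
   this is exactly the following. *)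
Definition in_ball (G : Group) (E : list G) (A : Type)
    (x : G -> A) (r : R) (y : G -> A) : Prop :=
  forall (g : G) (n : nat), x g <> y g -> word_len E g n -> (/ 2) ^ n <= r.
Arguments in_ball {G} E {A}.

Definition finite_type (A : Type) : Prop := exists l : list A, forall a : A, In a l.

Definition is_CA (G : Group) (A : Type) (Phi : (G -> A) -> (G -> A)) : Prop :=
  exists (S : list G) (mu : (G -> A) -> A),
    (forall p q : G -> A, (forall s, In s S -> p s = q s) -> mu p = mu q) /\
    (forall (x : G -> A) (g : G), Phi x g = mu (fun s => x (gmul g s))).
Arguments is_CA {G A}.

Definition equicontinuity_point (G : Group) (E : list G) (A : Type)
    (Phi : (G -> A) -> (G -> A)) (x : G -> A) : Prop :=
  forall eps, 0 < eps -> exists delta, 0 < delta /\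
    forall (t : nat) (y : G -> A), in_ball E x delta y ->
      in_ball E (Nat.iter t Phi x) eps (Nat.iter t Phi y).
Arguments equicontinuity_point {G} E {A}.

Definition sensitive (G : Group) (E : list G) (A : Type)
    (Phi : (G -> A) -> (G -> A)) : Prop :=
  exists eps, 0 < eps /\
    forall (x : G -> A) (delta : R), 0 < delta ->
      exists (t : nat) (y : G -> A), in_ball E x delta y /\
        ~ in_ball E (Nat.iter t Phi x) eps (Nat.iter t Phi y).
Arguments sensitive {G} E {A}.

(* Kurka's dichotomy (stated for every admissible generating set E;
   the notions are independent of E). *)
Definition kurka_dichotomy (G : Group) : Prop :=
  forall E : list G, gen_set E ->
  forall (A : Type), finite_type A ->
  forall Phi : (G -> A) -> (G -> A), is_CA Phi ->
    ~ sensitive E Phi -> exists x : G -> A, equicontinuity_point E Phi x.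

From Stdlib Require Import Reals List Lia Lra Classical ClassicalEpsilon Wf_nat
  FunctionalExtensionality PropExtensionality.
Import ListNotations.
Open Scope R_scope.

(* Balls of the Cantor metric d^E are cylinders, i.e. sets of configurations
   agreeing with a given one on a finite set, and every finite set lies in a
   word ball; so equicontinuity and sensitivity are properties of the
   prodiscrete uniformity and do not see the generating set.  A CA [Phi] on H
   with local rule [mu] induces the CA [Psi X g = mu (h |-> X (g f(h)))] on G,
   which acts on each left coset [r f(H)] as a copy of [Phi].  If [Phi] is not
   sensitive, copying a stable point of [Phi] onto every coset gives a stable
   point of [Psi], so [Psi] is not sensitive either; the dichotomy for G then
   yields an equicontinuity point X of [Psi], and X restricted to [f(H)] is an
   equicontinuity point of [Phi], because a perturbation of it extends to a
   perturbation of X supported on [f(H)]. *)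

Lemma half_pow_lt (m n : nat) : (m < n)%nat -> (/ 2) ^ n < (/ 2) ^ m.
Proof.
  induction 1 as [|n _ IH]; simpl.
  - assert (0 < (/ 2) ^ m) by (apply pow_lt; lra). lra.
  - assert (0 < (/ 2) ^ n) by (apply pow_lt; lra). lra.
Qed.

Lemma exists_half_pow_lt (eps : R) : 0 < eps -> exists k, (/ 2) ^ k < eps.
Proof.
  intros Heps.
  destruct (pow_lt_1_zero (/ 2)) with (y := eps) as [k Hk]; auto.
  { rewrite Rabs_right; lra. }
  exists k. specialize (Hk k (le_n _)).
  rewrite Rabs_right in Hk; auto. apply Rle_ge, pow_le; lra.
Qed.

Definition agree_on {G : Group} {A : Type} (L : list G) (x y : G -> A) : Prop :=
  forall g, In g L -> x g = y g.

Definition stable_on {G : Group} {A : Type} (Phi : (G -> A) -> (G -> A))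
    (x : G -> A) (M L : list G) : Prop :=
  forall (t : nat) (y : G -> A),
    agree_on M x y -> agree_on L (Nat.iter t Phi x) (Nat.iter t Phi y).

Section WordMetric.

Context {G : Group} {E : list G} (HE : gen_set E).

Lemma word_len_exists (g : G) : exists n, word_len E g n.
Proof.
  destruct (proj2 HE g) as [w [Hw Hprod]].
  destruct (dec_inh_nat_subset_has_unique_least_element
    (fun n => exists w, word_over E w /\ word_prod w = g /\ length w = n))
    as [n [[Hn Hmin] _]].
  - intros n; apply classic.
  - eauto.
  - exists n; split; [exact Hn|]. intros w' Hw' Hprod'. apply Hmin; eauto.
Qed.

Lemma short_word_prods_listable (k : nat) :
  exists L, forall w, word_over E w -> (length w <= k)%nat -> In (word_prod w) L.
Proof.
  induction k as [|k [L HL]].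
  - exists [gone]. intros [|e w] _ Hlen; simpl in *; [auto | lia].
  - exists (gone :: flat_map (fun e => map (gmul e) L) E).
    intros [|e w] Hw Hlen; simpl in *; [auto|]. right.
    apply in_flat_map. exists e. split; [apply Hw; simpl; auto|].
    apply in_map, HL; [intros e' He'; apply Hw; simpl; auto | lia].
Qed.

Lemma word_ball_listable (k : nat) :
  exists L, forall g n, word_len E g n -> (n <= k)%nat -> In g L.
Proof.
  destruct (short_word_prods_listable k) as [L HL]. exists L.
  intros g n [[w [Hw [<- Hlen]]] _] Hn. apply HL; [exact Hw | lia].
Qed.

Lemma word_len_bounded_on (L : list G) :
  exists k, forall g n, In g L -> word_len E g n -> (n <= k)%nat.
Proof.
  induction L as [|a L [k Hk]].
  - exists O. intros g n [].
  - destruct (proj2 HE a) as [w [Hw Hprod]]. exists (Nat.max (length w) k).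
    intros g n [<-|Hg] Hn.
    + pose proof (proj2 Hn w Hw Hprod). lia.
    + pose proof (Hk g n Hg Hn). lia.
Qed.

Lemma in_ball_of_agree_on (eps : R) : 0 < eps ->
  exists M, forall (A : Type) (x y : G -> A), agree_on M x y -> in_ball E x eps y.
Proof.
  intros Heps. destruct (exists_half_pow_lt eps Heps) as [k Hk].
  destruct (word_ball_listable k) as [M HM]. exists M.
  intros A x y Hxy g n Hne Hn.
  destruct (Compare_dec.le_gt_dec n k) as [Hle|Hgt].
  - exfalso. apply Hne, Hxy, (HM g n Hn Hle).
  - pose proof (half_pow_lt k n Hgt). lra.
Qed.

Lemma agree_on_of_in_ball (L : list G) :
  exists delta, 0 < delta /\
    forall (A : Type) (x y : G -> A), in_ball E x delta y -> agree_on L x y.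
Proof.
  destruct (word_len_bounded_on L) as [k Hk].
  exists ((/ 2) ^ S k). split; [apply pow_lt; lra|].
  intros A x y Hxy g Hg. apply NNPP. intros Hne.
  destruct (word_len_exists g) as [n Hn].
  pose proof (Hxy g n Hne Hn).
  assert (n < S k)%nat by (pose proof (Hk g n Hg Hn); lia).
  pose proof (half_pow_lt n (S k) ltac:(assumption)). lra.
Qed.

Lemma equicontinuity_point_iff {A : Type} {Phi : (G -> A) -> (G -> A)} (x : G -> A) :
  equicontinuity_point E Phi x <-> forall L, exists M, stable_on Phi x M L.
Proof.
  split.
  - intros Hx L.
    destruct (agree_on_of_in_ball L) as [eps [Heps HL]].
    destruct (Hx eps Heps) as [delta [Hdelta Hst]].
    destruct (in_ball_of_agree_on delta Hdelta) as [M HM].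
    exists M. intros t y Hy. apply HL, Hst, HM, Hy.
  - intros Hst eps Heps.
    destruct (in_ball_of_agree_on eps Heps) as [L HL].
    destruct (Hst L) as [M HM].
    destruct (agree_on_of_in_ball M) as [delta [Hdelta HM']].
    exists delta. split; [exact Hdelta|]. intros t y Hy. apply HL, HM, HM', Hy.
Qed.

Lemma not_sensitive_iff {A : Type} {Phi : (G -> A) -> (G -> A)} :
  ~ sensitive E Phi <-> forall L, exists x M, stable_on Phi x M L.
Proof.
  split.
  - intros Hns L.
    destruct (agree_on_of_in_ball L) as [eps [Heps HL]].
    apply NNPP. intros Hnone. apply Hns. exists eps. split; [exact Heps|].
    intros x delta Hdelta.
    destruct (in_ball_of_agree_on delta Hdelta) as [M HM].
    apply NNPP. intros Hnot. apply Hnone. exists x, M.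
    intros t y Hy. apply HL. apply NNPP. intros Hfar.
    apply Hnot. exists t, y. split; [apply HM, Hy | exact Hfar].
  - intros Hst [eps [Heps Hsens]].
    destruct (in_ball_of_agree_on eps Heps) as [L HL].
    destruct (Hst L) as [x [M HM]].
    destruct (agree_on_of_in_ball M) as [delta [Hdelta HM']].
    destruct (Hsens x delta Hdelta) as [t [y [Hy Hfar]]].
    apply Hfar, HL, HM, HM', Hy.
Qed.

End WordMetric.

Lemma gmul_cancel_l (G : Group) (a b c : G) : gmul a b = gmul a c -> b = c.
Proof.
  intros Habc.
  rewrite <- (gmul1l _ b), <- (gmul1l _ c), <- (gmulVl _ a), <- !gmulA, Habc.
  reflexivity.
Qed.

Lemma group_hom_one (G H : Group) (f : H -> G) : group_hom f -> f gone = gone.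
Proof.
  intros hf. apply (gmul_cancel_l _ (f gone)).
  rewrite <- hf, !gmul1r. reflexivity.
Qed.

Section Subgroup.

Context {G H : Group} (f : H -> G) (hf : group_hom f)
  (finj : forall a b : H, f a = f b -> a = b).

Definition preimage (g : G) : H := epsilon (inhabits gone) (fun h => f h = g).

Lemma preimage_f (h : H) : preimage (f h) = h.
Proof. apply finj, (epsilon_spec (inhabits gone) (fun h' => f h' = f h)). eauto. Qed.

Lemma f_preimage (g : G) : (exists h, f h = g) -> f (preimage g) = g.
Proof. apply (epsilon_spec (inhabits gone) (fun h => f h = g)). Qed.

Definition coset_rep (g : G) : G :=
  epsilon (inhabits gone) (fun r => exists h, g = gmul r (f h)).

Definition coset_coord (g : G) : H := preimage (gmul (ginv (coset_rep g)) g).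

Lemma coset_rep_spec (g : G) : exists h, g = gmul (coset_rep g) (f h).
Proof.
  apply (epsilon_spec (inhabits gone) (fun r => exists h, g = gmul r (f h))).
  exists g, gone. rewrite (group_hom_one _ _ _ hf), gmul1r. reflexivity.
Qed.

Lemma coset_rep_mul (g : G) (h : H) : coset_rep (gmul g (f h)) = coset_rep g.
Proof.
  unfold coset_rep. f_equal.
  apply functional_extensionality. intros r.
  apply propositional_extensionality. split.
  - intros [h' Hh']. exists (gmul h' (ginv h)).
    rewrite hf, gmulA, <- Hh', <- gmulA, <- hf, gmulVr, (group_hom_one _ _ _ hf), gmul1r.
    reflexivity.
  - intros [h' ->]. exists (gmul h' h). rewrite hf, gmulA. reflexivity.
Qed.

Lemma coset_rep_idem (g : G) : coset_rep (coset_rep g) = coset_rep g.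
Proof.
  destruct (coset_rep_spec g) as [h Hh].
  rewrite <- (coset_rep_mul (coset_rep g) h), <- Hh. reflexivity.
Qed.

Lemma coset_decomposition (g : G) : g = gmul (coset_rep g) (f (coset_coord g)).
Proof.
  unfold coset_coord. rewrite f_preimage.
  - rewrite gmulA, gmulVr, gmul1l. reflexivity.
  - destruct (coset_rep_spec g) as [h Hh]. exists h.
    apply (gmul_cancel_l _ (coset_rep g)).
    rewrite gmulA, gmulVr, gmul1l. symmetry. exact Hh.
Qed.

Lemma coset_coord_mul (g : G) (h : H) : coset_coord (gmul (coset_rep g) (f h)) = h.
Proof.
  unfold coset_coord.
  rewrite coset_rep_mul, coset_rep_idem, gmulA, gmulVl, gmul1l.
  apply preimage_f.
Qed.

Definition restrict_coset {A : Type} (r : G) (X : G -> A) : H -> A :=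
  fun h => X (gmul r (f h)).

Definition induced_CA {A : Type} (mu : (H -> A) -> A) : (G -> A) -> (G -> A) :=
  fun X g => mu (restrict_coset g X).

Lemma induced_CA_is_CA {A : Type} (S : list H) (mu : (H -> A) -> A) :
  (forall p q : H -> A, (forall s, In s S -> p s = q s) -> mu p = mu q) ->
  is_CA (induced_CA mu).
Proof.
  intros Hmu. exists (map f S), (fun p => mu (fun s => p (f s))). split.
  - intros p q Hpq. apply Hmu. intros s Hs. apply Hpq, in_map, Hs.
  - reflexivity.
Qed.

Section InducedCA.

Context {A : Type} {mu : (H -> A) -> A} {Phi : (H -> A) -> (H -> A)}
  (HPhi : forall (z : H -> A) (h : H), Phi z h = mu (fun s => z (gmul h s))).

Lemma restrict_coset_iter (t : nat) (r : G) (X : G -> A) :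
  restrict_coset r (Nat.iter t (induced_CA mu) X) = Nat.iter t Phi (restrict_coset r X).
Proof.
  induction t as [|t IH]; [reflexivity|].
  apply functional_extensionality. intros h. simpl Nat.iter.
  rewrite HPhi, <- IH. unfold induced_CA, restrict_coset at 1. f_equal.
  apply functional_extensionality. intros s.
  unfold restrict_coset. rewrite hf, gmulA. reflexivity.
Qed.

Lemma induced_CA_stable_of_stable :
  (forall L, exists x M, stable_on Phi x M L) ->
  forall L, exists X M, stable_on (induced_CA mu) X M L.
Proof.
  intros Hst L.
  destruct (Hst (map coset_coord L)) as [x [M HM]].
  set (X := fun g => x (coset_coord g)).
  exists X, (flat_map (fun g => map (fun h => gmul (coset_rep g) (f h)) M) L).
  intros t Y HY g Hg.
  assert (HXg : restrict_coset (coset_rep g) X = x).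
  { apply functional_extensionality. intros h. apply (f_equal x), coset_coord_mul. }
  assert (HYg : agree_on M x (restrict_coset (coset_rep g) Y)).
  { intros h Hh. rewrite <- HXg. apply HY, in_flat_map. exists g. split; [exact Hg|].
    apply (in_map (fun h => gmul (coset_rep g) (f h))), Hh. }
  rewrite (coset_decomposition g).
  change (restrict_coset (coset_rep g) (Nat.iter t (induced_CA mu) X) (coset_coord g)
        = restrict_coset (coset_rep g) (Nat.iter t (induced_CA mu) Y) (coset_coord g)).
  rewrite !restrict_coset_iter, HXg.
  apply (HM t _ HYg), in_map, Hg.
Qed.

Lemma restriction_stable_of_stable (X : G -> A) :
  (forall L, exists M, stable_on (induced_CA mu) X M L) ->
  forall L, exists M, stable_on Phi (restrict_coset gone X) M L.
Proof.
  intros HX L.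
  destruct (HX (map f L)) as [M HM]. exists (map preimage M).
  intros t y Hy h Hh.
  set (Y := fun g =>
    if excluded_middle_informative (exists h, f h = g) then y (preimage g) else X g).
  assert (HyY : restrict_coset gone Y = y).
  { apply functional_extensionality. intros h'.
    unfold restrict_coset, Y. rewrite gmul1l.
    destruct excluded_middle_informative as [_|Hnot].
    - apply f_equal, preimage_f.
    - exfalso. eauto. }
  assert (HXY : agree_on M X Y).
  { intros g Hg. unfold Y.
    destruct excluded_middle_informative as [[h' <-]|_]; [|reflexivity].
    rewrite preimage_f, <- (gmul1l _ (f h')). apply Hy.
    rewrite <- (preimage_f h'). apply in_map, Hg. }
  rewrite <- HyY, <- !restrict_coset_iter.
  unfold restrict_coset. rewrite gmul1l. apply (HM t Y HXY), in_map, Hh.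
Qed.

End InducedCA.

End Subgroup.

Theorem corollary1 (G H : Group) (f : H -> G) :
  group_hom f -> (forall a b : H, f a = f b -> a = b) ->
  fin_gen G -> kurka_dichotomy G ->
  fin_gen H -> kurka_dichotomy H.
Proof.
  intros hf finj [EG HEG] KG _ EH HEH A HA Phi [S [mu [Hmu HPhi]]] Hns.
  destruct (KG EG HEG A HA (induced_CA f mu)) as [X HX].
  - exact (induced_CA_is_CA f S mu Hmu).
  - apply (not_sensitive_iff HEG), (induced_CA_stable_of_stable f hf finj HPhi).
    exact (proj1 (not_sensitive_iff HEH) Hns).
  - exists (restrict_coset f gone X).
    apply (equicontinuity_point_iff HEH), (restriction_stable_of_stable f hf finj HPhi).
    exact (proj1 (equicontinuity_point_iff HEG X) HX).
Qed.
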